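(* Let $\|\cdot\|$ be a polyhedral seminorm on $\mathbb{R}^n$, let $\mathcal{B}=\{x:\|x\|\le1\}$ and $p^*=W(\mathcal{B})$. Then there is a set $\Sigma$ of real $n\times n$ matrices for which $\|\cdot\|$ is nonincreasing and such that (i) every infinite periodic product of matrices from $\Sigma$ with period smaller than $p^*$ contracts $\|\cdot\|$, and (ii) not every left-infinite product of matrices from $\Sigma$ contracts $\|\cdot\|$.
   Context: A seminorm is polyhedral if its unit ball is a polyhedron (defined by finitely many linear inequalities). $\|\cdot\|$ is nonincreasing for $\Sigma$ if $\|Ax\|\le\|x\|$ for all $x$ and all $A\in\Sigma$. A left-infinite product $\dots A_{\sigma(2)}A_{\sigma(1)}$ contracts $\|\cdot\|$ if there is $t$ with $A_{\sigma(t)}\cdots A_{\sigma(1)}\mathcal{B}\subset\mathrm{int}(\mathcal{B})$; it is periodic with period $p$ if $\sigma(i+p)=\sigma(i)$ for all $i$. For a polyhedron $\mathcal{Q}$, a face is $\mathcal{Q}$, $\varnothing$, or a nonempty set $\mathcal{Q}\cap\{x:b^\top x=c\}$ where $b^\top x\le c$ on $\mathcal{Q}$; a proper face is a face other than $\mathcal{Q},\varnothing$. For centrally symmetric $\mathcal{Q}$, a double-face is $F\cup-F$ with $F$ a proper face; the lattice of double-faces is the set of double-faces together with $\mathcal{Q}$ and $\varnothing$, ordered by inclusion; $W(\mathcal{Q})$ is the maximum size of an antichain (set of pairwise incomparable elements) in this lattice. *)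

From HB Require Import structures.
From mathcomp Require Import all_boot all_order all_algebra.
From mathcomp Require Import reals.
Set Implicit Arguments. Unset Strict Implicit. Unset Printing Implicit Defensive.
Import Order.TTheory GRing.Theory Num.Theory.
Local Open Scope ring_scope.

Definition is_seminorm (R : realType) (n : nat) (N : 'cV[R]_n -> R) : Prop :=
  (forall x y, N (x + y) <= N x + N y) /\ (forall (a : R) x, N (a *: x) = `|a| * N x).

Definition is_polyhedron (R : realType) (n : nat) (P : 'cV[R]_n -> Prop) : Prop :=
  exists (m : nat) (C : 'M[R]_(m, n)) (d : 'cV[R]_m),
    forall x, P x <-> (forall i, (C *m x) i 0 <= d i 0).

Definition unit_ball (R : realType) (n : nat) (N : 'cV[R]_n -> R) : 'cV[R]_n -> Prop :=
  fun x => N x <= 1.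

Definition polyhedral_seminorm (R : realType) (n : nat) (N : 'cV[R]_n -> R) : Prop :=
  is_seminorm N /\ is_polyhedron (unit_ball N).

(* interior w.r.t. the standard topology of R^n (sup-norm balls) *)
Definition in_interior (R : realType) (n : nat) (P : 'cV[R]_n -> Prop) (x : 'cV[R]_n) : Prop :=
  exists e : R, 0 < e /\ forall y : 'cV[R]_n, (forall i, `|y i 0 - x i 0| < e) -> P y.

Definition dotv (R : realType) (n : nat) (b x : 'cV[R]_n) : R := \sum_(i < n) b i 0 * x i 0.

Definition emptyset {R : realType} {n : nat} : 'cV[R]_n -> Prop := fun _ => False.

Definition is_face (R : realType) (n : nat) (Q F : 'cV[R]_n -> Prop) : Prop :=
  F = Q \/ F = (@emptyset R n) \/
  exists (b : 'cV[R]_n) (c : R),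
    (forall x, Q x -> dotv b x <= c) /\ (exists x, Q x /\ dotv b x = c) /\
    F = (fun x => Q x /\ dotv b x = c).

Definition is_proper_face (R : realType) (n : nat) (Q F : 'cV[R]_n -> Prop) : Prop :=
  is_face Q F /\ F <> Q /\ F <> (@emptyset R n).

Definition is_double_face (R : realType) (n : nat) (Q D : 'cV[R]_n -> Prop) : Prop :=
  exists F, is_proper_face Q F /\ D = (fun x => F x \/ F (- x)).

Definition in_df_lattice (R : realType) (n : nat) (Q D : 'cV[R]_n -> Prop) : Prop :=
  D = Q \/ D = (@emptyset R n) \/ is_double_face Q D.

Definition has_antichain (R : realType) (n : nat) (Q : 'cV[R]_n -> Prop) (k : nat) : Prop :=
  exists f : 'I_k -> ('cV[R]_n -> Prop),
    (forall i, in_df_lattice Q (f i)) /\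
    (forall i j, i <> j -> ~ (forall x, f i x -> f j x)).

Definition is_W (R : realType) (n : nat) (Q : 'cV[R]_n -> Prop) (k : nat) : Prop :=
  has_antichain Q k /\ (forall m, has_antichain Q m -> (m <= k)%N).

Definition nonincreasing_for (R : realType) (n : nat) (N : 'cV[R]_n -> R)
  (Sigma : 'M[R]_n -> Prop) : Prop :=
  forall A, Sigma A -> forall x, N (A *m x) <= N x.

(* lprod s t = s (t-1) * ... * s 1 * s 0  (s 0 plays the role of A_{sigma(1)}) *)
Fixpoint lprod (R : realType) (n : nat) (s : nat -> 'M[R]_n) (t : nat) : 'M[R]_n :=
  match t with
  | 0 => 1%:M
  | t'.+1 => s t' *m lprod s t'
  end.

Definition contracts (R : realType) (n : nat) (N : 'cV[R]_n -> R) (s : nat -> 'M[R]_n) : Prop :=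
  exists t : nat, (0 < t)%N /\
    forall x, unit_ball N x -> in_interior (unit_ball N) (lprod s t *m x).

Definition periodic_with (R : realType) (n : nat) (s : nat -> 'M[R]_n) (p : nat) : Prop :=
  (0 < p)%N /\ forall i, s (i + p)%N = s i.

From HB Require Import structures.
From mathcomp Require Import all_boot all_order all_algebra.
From mathcomp Require Import reals.
From Stdlib Require Import Classical FunctionalExtensionality PropExtensionality.
Set Implicit Arguments. Unset Strict Implicit. Unset Printing Implicit Defensive.
Import Order.TTheory GRing.Theory Num.Theory.
Local Open Scope ring_scope.

(* Each member [f a] of an antichain of [K] double faces of the unit ball is
   exposed by a functional [r a] (the double face is where [|r a x| = 1]), and
   incomparability gives points [v a] of the ball with [r a (v a) = 1] and
   [|r b (v a)| < 1] for [b <> a].  The rank-one maps [v (a + 1) r a], indices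
   mod [K], do not increase the seminorm.  Following the cycle carries [v a] to
   [v (a + 1)] forever, so that product never contracts; a product of period
   [p < K] must somewhere follow [v (a + 1) r a] by [v (b + 1) r b] with
   [b <> a + 1], and [|r b (v (a + 1))| < 1] then pushes the ball strictly
   inside itself.  When [K <= 1] the identity alone does the job. *)

Definition rapp (R : realType) (n : nat) (r : 'rV[R]_n) (x : 'cV[R]_n) : R := (r *m x) 0 0.

Section RowFunctional.
Variables (R : realType) (n : nat).
Implicit Types (r : 'rV[R]_n) (x : 'cV[R]_n).

Lemma rappZ r a x : rapp r (a *: x) = a * rapp r x.
Proof. by rewrite /rapp -scalemxAr mxE. Qed.

Lemma rappN r x : rapp r (- x) = - rapp r x.
Proof. by rewrite -scaleN1r rappZ mulN1r. Qed.

Lemma rapp_sum r (I : finType) (F : I -> 'cV[R]_n) :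
  rapp r (\sum_i F i) = \sum_i rapp r (F i).
Proof. by rewrite /rapp mulmx_sumr summxE. Qed.

Lemma dotv_rapp (b x : 'cV[R]_n) : dotv b x = rapp b^T x.
Proof. by rewrite /dotv /rapp mxE; apply: eq_bigr => j _; rewrite mxE. Qed.

Lemma mulmx_rank1 (u : 'cV[R]_n) r x : (u *m r) *m x = rapp r x *: u.
Proof. by rewrite -mulmxA /rapp {1}[r *m x]mx11_scalar mul_mx_scalar. Qed.

End RowFunctional.

Section Seminorm.
Variables (R : realType) (n : nat) (N : 'cV[R]_n -> R).
Hypothesis HN : is_seminorm N.

Lemma seminormZ a x : N (a *: x) = `|a| * N x.
Proof. by case: HN. Qed.

Lemma seminormD x y : N (x + y) <= N x + N y.
Proof. by case: HN. Qed.

Lemma seminorm0 : N 0 = 0.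
Proof. by rewrite -(scale0r 0) seminormZ normr0 mul0r. Qed.

Lemma seminormN x : N (- x) = N x.
Proof. by rewrite -scaleN1r seminormZ normrN normr1 mul1r. Qed.

Lemma seminorm_ge0 x : 0 <= N x.
Proof.
have := seminormD x (- x).
by rewrite subrr seminorm0 seminormN -mulr2n pmulrn_lge0.
Qed.

Lemma seminorm_sum (I : finType) (F : I -> 'cV[R]_n) : N (\sum_i F i) <= \sum_i N (F i).
Proof.
elim/big_ind2: _ => [|x1 x2 y1 y2 h1 h2|//]; first by rewrite seminorm0.
exact: le_trans (seminormD _ _) (lerD h1 h2).
Qed.

Lemma unit_ballN x : unit_ball N (- x) <-> unit_ball N x.
Proof. by rewrite /unit_ball seminormN. Qed.

Lemma unit_sphere_exists : (exists x, N x <> 0) -> exists z, N z = 1.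
Proof.
case=> x /eqP Nx0; have Nx : 0 < N x by rewrite lt_def Nx0 seminorm_ge0.
by exists ((N x)^-1 *: x); rewrite seminormZ normfV gtr0_norm // mulVf.
Qed.

(* Moving from [z] along the ray through [z] leaves the ball at once. *)
Lemma unit_sphere_not_interior z : N z = 1 -> ~ in_interior (unit_ball N) z.
Proof.
move=> Nz [e [e0 He]].
pose S := \sum_(j < n) `|z j 0|.
have S0 : 0 <= S by apply: sumr_ge0.
pose d := e / (S + 1).
have d0 : 0 < d by rewrite divr_gt0 // ltr_wpDl.
have near : forall i, `|((1 + d) *: z) i 0 - z i 0| < e.
  move=> i; rewrite mxE mulrDl mul1r addrC addKr normrM (gtr0_norm d0).
  have zi : `|z i 0| <= S by rewrite /S (bigD1 i) //= lerDl sumr_ge0.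
  apply: le_lt_trans (ler_wpM2l (ltW d0) zi) _.
  by rewrite /d mulrAC ltr_pdivrMr ?ltr_pM2l ?ltrDl // ltr_wpDl.
have := He _ near; rewrite /unit_ball seminormZ Nz mulr1 ger0_norm.
  by rewrite gerDl leNgt d0.
by rewrite addr_ge0 // ltW.
Qed.

Lemma seminorm_lt1_interior z : N z < 1 -> in_interior (unit_ball N) z.
Proof.
move=> Nz; pose C := \sum_(i < n) N (delta_mx i 0).
have C0 : 0 <= C by apply: sumr_ge0 => i _; apply: seminorm_ge0.
have C1 : 0 < 1 + C by rewrite ltr_wpDr.
exists ((1 - N z) / (1 + C)); split; first by rewrite divr_gt0 ?subr_gt0.
move=> y Hy; have Nyz : N (y - z) <= (1 - N z) / (1 + C) * C.
  rewrite [y - z]matrix_sum_delta; under eq_bigr do rewrite big_ord1.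
  apply: le_trans (seminorm_sum _) _; rewrite /C mulr_sumr; apply: ler_sum => i _.
  by rewrite seminormZ ler_wpM2r ?seminorm_ge0 // !mxE ltW.
rewrite /unit_ball -(subrK z y) addrC; apply: le_trans (seminormD _ _) _.
rewrite -lerBrDl; apply: le_trans Nyz _.
by rewrite mulrAC ler_pdivrMr // ler_pM2l ?subr_gt0 // lerDr.
Qed.

(* Where [N x = 0] the whole line through [x] lies in the ball, which forces
   [rapp rho x = 0]. *)
Lemma norm_rapp_le (rho : 'rV[R]_n) :
  (forall x, unit_ball N x -> rapp rho x <= 1) -> forall x, `|rapp rho x| <= N x.
Proof.
move=> rho1; have rho_ball x : unit_ball N x -> `|rapp rho x| <= 1.
  by move=> Bx; rewrite ler_norml rho1 // andbT lerNl -rappN rho1 // unit_ballN.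
move=> x; have [Nx0|Nx] := eqVneq (N x) 0.
- rewrite Nx0 leNgt; apply/negP => rx.
  have := rho_ball ((2 / `|rapp rho x|) *: x).
  rewrite /unit_ball seminormZ Nx0 mulr0 ler01 => /(_ isT).
  rewrite rappZ normrM normrM ger0_norm // normfV normr_id divfK ?gt_eqF //.
  by rewrite leNgt ltr1n.
- have Nx_gt0 : 0 < N x by rewrite lt_def Nx seminorm_ge0.
  have := rho_ball ((N x)^-1 *: x).
  rewrite /unit_ball seminormZ normfV (gtr0_norm Nx_gt0) mulVf // => /(_ (lexx _)).
  by rewrite rappZ normrM normfV (gtr0_norm Nx_gt0) mulrC ler_pdivrMr // mul1r.
Qed.

End Seminorm.

Definition contraction_gap (R : realType) (n : nat) (N : 'cV[R]_n -> R) (K : nat)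
    (Sigma : 'M[R]_n -> Prop) : Prop :=
  nonincreasing_for N Sigma /\
  (forall (s : nat -> 'M[R]_n) (p : nat),
      (forall i, Sigma (s i)) -> periodic_with s p -> (p < K)%N -> contracts N s) /\
  ~ (forall s : nat -> 'M[R]_n, (forall i, Sigma (s i)) -> contracts N s).

Lemma lprod_nonincreasing (R : realType) (n : nat) (N : 'cV[R]_n -> R) Sigma
    (s : nat -> 'M[R]_n) t x :
  nonincreasing_for N Sigma -> (forall i, Sigma (s i)) -> N (lprod s t *m x) <= N x.
Proof.
move=> HS Hs; elim: t => [|t IH] /=; first by rewrite mul1mx.
by rewrite -mulmxA; apply: le_trans (HS _ (Hs t) _) IH.
Qed.

Lemma identity_contraction_gap (R : realType) (n : nat) (N : 'cV[R]_n -> R) (K : nat) :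
  is_seminorm N -> (exists x, N x <> 0) -> (K <= 1)%N ->
  contraction_gap N K (fun A => A = 1%:M).
Proof.
move=> HN /(unit_sphere_exists HN) [z Nz] K1.
split; first by move=> A -> x; rewrite mul1mx.
split=> [s p _ [p_gt0 _] pK|all_contract].
  by have := leq_trans pK K1; rewrite ltnS leqNgt p_gt0.
have [t [_ Ht]] := all_contract (fun=> 1%:M) (fun=> erefl).
have lprod1 k : lprod (fun=> 1%:M : 'M[R]_n) k = 1%:M by elim: k => //= k ->; rewrite mul1mx.
apply: (unit_sphere_not_interior HN Nz).
by rewrite -[z]mul1mx -(lprod1 t); apply: Ht; rewrite /unit_ball Nz.
Qed.

Lemma iter_ordS K (a : 'I_K) i : val (iter i (@ordS K) a) = ((a + i) %% K)%N.
Proof.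
elim: i => [|i IH]; first by rewrite addn0 modn_small.
by rewrite iterS /= IH -addn1 modnDml addn1 addnS.
Qed.

Section RankOneCycle.
Variables (R : realType) (n : nat) (N : 'cV[R]_n -> R) (K : nat).
Variables (v : 'I_K -> 'cV[R]_n) (r : 'I_K -> 'rV[R]_n).
Hypothesis HN : is_seminorm N.
Hypothesis r_le : forall a x, `|rapp (r a) x| <= N x.
Hypothesis r_v : forall a, rapp (r a) (v a) = 1.
Hypothesis r_v_lt1 : forall a b, a != b -> `|rapp (r a) (v b)| < 1.
Hypothesis v_ball : forall a, unit_ball N (v a).

Definition cycle_mx a := v (ordS a) *m r a.

Definition cycle_set A := exists a, A = cycle_mx a.

Lemma cycle_vector_norm a : N (v a) = 1.
Proof. by apply/le_anti; rewrite v_ball -normr1 -(r_v a) r_le. Qed.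

Lemma cycle_mxE a x : cycle_mx a *m x = rapp (r a) x *: v (ordS a).
Proof. exact: mulmx_rank1. Qed.

Lemma cycle_mx_inj : injective cycle_mx.
Proof.
move=> a b Mab; apply/eqP; apply: contraT => neq_ab.
have := congr1 (fun A => N (A *m v a)) Mab.
rewrite /= !cycle_mxE !seminormZ // !cycle_vector_norm !mulr1 r_v normr1 => E.
by have := @r_v_lt1 b a; rewrite eq_sym neq_ab -E ltxx => /(_ isT).
Qed.

Lemma cycle_set_nonincreasing : nonincreasing_for N cycle_set.
Proof. by move=> _ [a ->] x; rewrite cycle_mxE seminormZ // cycle_vector_norm mulr1. Qed.

Lemma cycle_break_contracts (s : nat -> 'M[R]_n) i a b :
  (forall i, cycle_set (s i)) -> s i = cycle_mx a -> s i.+1 = cycle_mx b -> b != ordS a ->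
  forall x, unit_ball N x -> N (lprod s i.+2 *m x) < 1.
Proof.
move=> Hs sa sb ba x Bx.
rewrite /= -!mulmxA sb sa !cycle_mxE rappZ seminormZ // cycle_vector_norm mulr1 normrM.
have y_le1 : `|rapp (r a) (lprod s i *m x)| <= 1.
  exact: le_trans (r_le _ _) (le_trans (lprod_nonincreasing i x cycle_set_nonincreasing Hs) Bx).
by apply: le_lt_trans (ler_wpM2r (normr_ge0 _) y_le1) _; rewrite mul1r r_v_lt1.
Qed.

Lemma periodic_breaks_cycle (s : nat -> 'M[R]_n) p :
  (forall i, cycle_set (s i)) -> periodic_with s p -> (p < K)%N ->
  exists i a b, [/\ s i = cycle_mx a, s i.+1 = cycle_mx b & b != ordS a].
Proof.
move=> Hs [p_gt0 Hp] pK; apply: NNPP => no_break.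
have [a0 s0] := Hs 0%N.
have orbit i : s i = cycle_mx (iter i (@ordS K) a0).
  elim: i => [//|i IH]; have [b sb] := Hs i.+1.
  rewrite sb iterS; congr cycle_mx; apply/eqP; apply: contraT => nb.
  by case: no_break; exists i, (iter i (@ordS K) a0), b.
have : iter p (@ordS K) a0 = a0 by apply: cycle_mx_inj; rewrite -orbit -s0 -(Hp 0%N).
move=> /(congr1 val); rewrite iter_ordS => Ea.
have : (a0 + p == a0 + 0 %[mod K])%N by rewrite Ea addn0 modn_small.
by rewrite eqn_modDl mod0n modn_small // (gtn_eqF p_gt0).
Qed.

Lemma periodic_cycle_contracts (s : nat -> 'M[R]_n) p :
  (forall i, cycle_set (s i)) -> periodic_with s p -> (p < K)%N -> contracts N s.
Proof.
move=> Hs sp pK; have [i [a [b [sa sb ba]]]] := periodic_breaks_cycle Hs sp pK.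
exists i.+2; split=> // x Bx.
exact/seminorm_lt1_interior/(cycle_break_contracts Hs sa sb ba).
Qed.

Lemma cycle_orbit_not_contracts (a0 : 'I_K) :
  ~ contracts N (fun i => cycle_mx (iter i (@ordS K) a0)).
Proof.
move=> [t [_ Ht]].
have orbit k :
    lprod (fun i => cycle_mx (iter i (@ordS K) a0)) k *m v a0 = v (iter k (@ordS K) a0).
  by elim: k => [|k IH] /=; rewrite ?mul1mx // -mulmxA IH cycle_mxE r_v scale1r.
apply: (unit_sphere_not_interior HN (cycle_vector_norm (iter t (@ordS K) a0))).
by rewrite -orbit; apply: Ht.
Qed.

Lemma rank_one_cycle_gap (a0 : 'I_K) : contraction_gap N K cycle_set.
Proof.
split; first exact: cycle_set_nonincreasing.
split; first exact: periodic_cycle_contracts.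
move=> all_contract; apply: (@cycle_orbit_not_contracts a0).
by apply: all_contract => i; exists (iter i (@ordS K) a0).
Qed.

End RankOneCycle.

Lemma face_sub (R : realType) (n : nat) (Q F : 'cV[R]_n -> Prop) x :
  is_face Q F -> F x -> Q x.
Proof. by case=> [->|[->|[b [c [_ [_ ->]]]]]] //; case. Qed.

Section ExposedDoubleFaces.
Variables (R : realType) (n : nat) (N : 'cV[R]_n -> R).
Hypothesis HN : is_seminorm N.

Definition exposed_by (rho : 'rV[R]_n) (D : 'cV[R]_n -> Prop) : Prop :=
  (forall x, unit_ball N x -> rapp rho x <= 1) /\
  (forall x, D x <-> unit_ball N x /\ `|rapp rho x| = 1).

Lemma df_lattice_sub D x : in_df_lattice (unit_ball N) D -> D x -> unit_ball N x.
Proof.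
case=> [->|[->|[F [[HF _] ->]]]] // [Fx|Fx]; first exact: face_sub HF Fx.
exact/(unit_ballN HN)/(face_sub HF Fx).
Qed.

Lemma df_incomparable_double_face D D' :
  in_df_lattice (unit_ball N) D -> in_df_lattice (unit_ball N) D' ->
  ~ (forall x, D x -> D' x) -> ~ (forall x, D' x -> D x) ->
  is_double_face (unit_ball N) D.
Proof.
case=> [->|[->|//]] HD' DD' D'D; last by case: DD'.
by case: D'D => x; apply: df_lattice_sub.
Qed.

(* A proper face of a symmetric polytope avoids the centre, so its supporting
   inequality can be normalised to [rho x <= 1]; the double face is then where
   [|rho x| = 1]. *)
Lemma double_face_exposed D : is_double_face (unit_ball N) D -> exists rho, exposed_by rho D.
Proof.
case=> F [[[->|[->|[b [c [b_le [[x0 [Bx0 bx0]] ->]]]]]] [FQ _]] ->] //.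
have bN x : dotv b (- x) = - dotv b x by rewrite !dotv_rapp rappN.
have c_gt0 : 0 < c.
  rewrite lt_def; apply/andP; split; last first.
    have := b_le _ (proj2 (unit_ballN HN x0) Bx0).
    by rewrite bN bx0 -subr_ge0 opprK -mulr2n pmulrn_lge0.
  apply/eqP => c0; apply: FQ; apply: functional_extensionality => x.
  apply: propositional_extensionality; split=> [[]//|Bx]; split=> //.
  apply/le_anti; rewrite b_le //= c0 -oppr_le0 -bN -c0; apply: b_le.
  exact/(unit_ballN HN).
have cn0 : c != 0 := lt0r_neq0 c_gt0.
have norm_eq t : `|t| = c <-> t = c \/ - t = c.
  split=> [<-|[] E]; last 2 first.
  - by rewrite E gtr0_norm.
  - by rewrite -normrN E gtr0_norm.
  by have [t0|t0] := leP 0 t; [left; rewrite ger0_norm | right; rewrite ltr0_norm].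
pose rho := c^-1 *: b^T.
have rhoE x : rapp rho x = c^-1 * dotv b x by rewrite dotv_rapp /rapp -scalemxAl mxE.
have rho_eq1 x : `|rapp rho x| = 1 <-> dotv b x = c \/ dotv b (- x) = c.
  rewrite rhoE normrM gtr0_norm ?invr_gt0 // bN -norm_eq.
  by split=> [/(canRL (mulVKf cn0))|->]; rewrite ?mulVf // mulr1.
exists rho; split=> [x Bx|x]; first by rewrite rhoE mulrC ler_pdivrMr // mul1r b_le.
split=> [[[Bx E]|[Bx E]]|[Bx /rho_eq1 [E|E]]].
- by split=> //; apply/rho_eq1; left.
- by split; [exact/(unit_ballN HN) | apply/rho_eq1; right].
- by left.
- by right; split=> //; exact/(unit_ballN HN).
Qed.

Lemma exposed_separating_point rho rho' D D' :
  exposed_by rho D -> exposed_by rho' D' -> ~ (forall x, D x -> D' x) ->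
  exists y, [/\ unit_ball N y, rapp rho y = 1 & `|rapp rho' y| < 1].
Proof.
move=> [_ Drho] [rho'_le D'rho'] DD'.
have [x Hx] := not_all_ex_not _ _ DD'.
have [Dx nD'x] := imply_to_and _ _ Hx.
have [Bx /eqP] := proj1 (Drho x) Dx.
have rho'x : `|rapp rho' x| < 1.
  rewrite lt_neqAle (le_trans (norm_rapp_le HN rho'_le x) Bx) andbT.
  by apply/eqP => E; apply: nD'x; apply/D'rho'.
rewrite eqr_norml ler01 andbT => /orP[/eqP E|/eqP E]; first by exists x.
by exists (- x); rewrite !rappN E opprK normrN; split=> //; exact/(unit_ballN HN).
Qed.

(* The average over [a] of the points separating [b] from [a] keeps [r b = 1]
   and inherits the strict inequality [|r a| < 1] for every [a <> b]. *)
Lemma average_separating_points K (r : 'I_K -> 'rV[R]_n) :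
  (forall a x, `|rapp (r a) x| <= N x) ->
  (forall b a, exists y,
     [/\ unit_ball N y, rapp (r b) y = 1 & b != a -> `|rapp (r a) y| < 1]) ->
  exists v : 'I_K -> 'cV[R]_n,
    [/\ forall a, rapp (r a) (v a) = 1,
        forall a b, a != b -> `|rapp (r a) (v b)| < 1
      & forall a, unit_ball N (v a)].
Proof.
move=> r_le sep; have [Y HY] := fin_all_exists (fun b => fin_all_exists (sep b)).
have r_Y_le1 a b c : `|rapp (r a) (Y b c)| <= 1.
  by have [BY _ _] := HY b c; apply: le_trans (r_le _ _) BY.
have sum1 : \sum_(c < K) (1 : R) = K%:R by rewrite sumr_const card_ord.
have K_gt0 (b : 'I_K) : 0 < (K%:R : R) by rewrite ltr0n (leq_ltn_trans (leq0n b)).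
have K_neq0 (b : 'I_K) : (K%:R : R) != 0 := lt0r_neq0 (K_gt0 b).
exists (fun b => (K%:R)^-1 *: \sum_c Y b c); split=> [b|a b ab|b].
- rewrite rappZ rapp_sum (eq_bigr (fun=> 1)) => [|c _]; last by have [] := HY b c.
  by rewrite sum1 (mulVf (K_neq0 b)).
- rewrite rappZ rapp_sum normrM normfV (gtr0_norm (K_gt0 b)) mulrC.
  rewrite (ltr_pdivrMr _ _ (K_gt0 b)) mul1r -sum1; apply: le_lt_trans (ler_norm_sum _ _ _) _.
  rewrite (bigD1 a) //= [ltRHS](bigD1 a) //=; apply: ltr_leD.
    by have [_ _] := HY b a; apply; rewrite eq_sym.
  by apply: ler_sum => c _; apply: r_Y_le1.
- rewrite /unit_ball seminormZ // normfV (gtr0_norm (K_gt0 b)) mulrC.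
  rewrite (ler_pdivrMr _ _ (K_gt0 b)) mul1r -sum1; apply: le_trans (seminorm_sum HN _) _.
  by apply: ler_sum => c _; have [] := HY b c.
Qed.

End ExposedDoubleFaces.

Theorem theorem2 (R : realType) (n : nat) (N : 'cV[R]_n -> R) (pstar : nat) :
  polyhedral_seminorm N ->
  (exists x, N x <> 0) ->
  is_W (unit_ball N) pstar ->
  exists Sigma : 'M[R]_n -> Prop,
    nonincreasing_for N Sigma /\
    (forall (s : nat -> 'M[R]_n) (p : nat),
        (forall i, Sigma (s i)) -> periodic_with s p -> (p < pstar)%N -> contracts N s) /\
    ~ (forall s : nat -> 'M[R]_n, (forall i, Sigma (s i)) -> contracts N s).
Proof.
move=> [HN _] N_nonzero [[f [f_lat f_anti]] _].
have [p_le1|p_gt1] := leqP pstar 1.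
  by exists (fun A => A = 1%:M); apply: identity_contraction_gap.
pose a0 : 'I_pstar := Ordinal (ltnW p_gt1).
have other (a : 'I_pstar) : exists j, a != j.
  by have [->|a_neq_a0] := eqVneq a a0; [exists (Ordinal p_gt1) | exists a0].
have incomparable a b : a != b -> ~ (forall x, f a x -> f b x).
  by move=> ab; apply: f_anti; apply/eqP.
have exposed a : exists rho, exposed_by N rho (f a).
  have [j aj] := other a; apply: (double_face_exposed HN).
  apply: (df_incomparable_double_face HN (f_lat a) (f_lat j)); apply: incomparable => //.
  by rewrite eq_sym.
have [r r_exposed] := fin_all_exists exposed.
have r_le a x : `|rapp (r a) x| <= N x := norm_rapp_le HN (proj1 (r_exposed a)) x.
have sep b a : exists y,
    [/\ unit_ball N y, rapp (r b) y = 1 & b != a -> `|rapp (r a) y| < 1].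
  have [j bj] := other b; have [<-|ba] := eqVneq b a.
    have [y [By ry _]] :=
      exposed_separating_point HN (r_exposed b) (r_exposed j) (incomparable _ _ bj).
    by exists y.
  have [y [By ry ray]] :=
    exposed_separating_point HN (r_exposed b) (r_exposed a) (incomparable _ _ ba).
  by exists y.
have [v [r_v r_v_lt1 v_ball]] := average_separating_points HN r_le sep.
by exists (cycle_set v r); apply: rank_one_cycle_gap HN r_le r_v r_v_lt1 v_ball a0.
Qed.
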